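(* Let $n\ge 4$ and let $G$ be a graph having the maximum value of $cM_2$ among all connected graphs of order $n$. Then $$|M(G)|\le -\frac{2}{3}n+\frac{3}{2}+\frac{1}{6}\sqrt{52n^2-132n+81}.$$
   Context: All graphs are finite and simple. For a graph $G$ and a vertex $u$, $d_u(G)$ denotes the degree of $u$ in $G$. The complementary second Zagreb index of $G$ is $cM_2(G)=\sum_{uv\in E(G)}\left|(d_u(G))^2-(d_v(G))^2\right|$. $M(G)$ denotes the set of vertices of $G$ having the maximum degree of $G$. *)

From HB Require Import structures.
From mathcomp Require Import all_boot all_order all_algebra.
Set Implicit Arguments. Unset Strict Implicit. Unset Printing Implicit Defensive.
Import Order.TTheory GRing.Theory Num.Theory.

Definition simple_graph (n : nat) (e : rel 'I_n) : Prop :=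
  symmetric e /\ irreflexive e.

Definition connected_graph (n : nat) (e : rel 'I_n) : Prop :=
  forall u v : 'I_n, connect e u v.

Definition deg (n : nat) (e : rel 'I_n) (u : 'I_n) : nat :=
  #|[set v | e u v]|.

(* cM_2(G) = sum over (unordered) edges uv of |d_u^2 - d_v^2| ;
   each unordered edge {u,v} is counted once via the pair with u < v. *)
Definition cM2 (n : nat) (e : rel 'I_n) : nat :=
  \sum_(u : 'I_n) \sum_(v : 'I_n | (u < v)%N && e u v)
     absz ((deg e u ^ 2)%:Z - (deg e v ^ 2)%:Z)%R.

Definition maxdeg (n : nat) (e : rel 'I_n) : nat := \max_(u : 'I_n) deg e u.

Definition Mset (n : nat) (e : rel 'I_n) : {set 'I_n} :=
  [set u | deg e u == maxdeg e].

(* In a connected graph maximising cM2, every vertex u of maximum degree is adjacent to all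
   other vertices: joining u to a non-neighbour v raises each of the d_u weights at u by exactly
   2 d_u + 1 (as d_u is maximal) and lowers each of the d_v weights at v by at most 2 d_v + 1,
   a net gain since 0 < d_u and d_v <= d_u (if d_v = d_u, the weights at v rise too).
   So M(G) is a dominating set. With k = |M(G)| and m = n - k, every other vertex b has
   k <= d_b, the k m edges leaving M(G) weigh (n-1)^2 - d_b^2 each, and an edge ab inside the
   complement weighs at most (d_a^2 - k^2) + (d_b^2 - k^2). When m <= k this bounds cM2(G) by
   k m ((n-1)^2 - k^2), the value of the split graph with k dominating vertices and m
   independent ones. If 2k > n, the split graph with m dominating vertices has the larger value
   k m ((n-1)^2 - m^2) (and when m = 0, G is complete and a star beats it). Hence 2k <= n,
   which implies the bound of the theorem. *)

From HB Require Import structures.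
From mathcomp Require Import all_boot all_order all_algebra.
From mathcomp Require Import zify ring lra.
Import Order.TTheory GRing.Theory Num.Theory.
Set Implicit Arguments. Unset Strict Implicit. Unset Printing Implicit Defensive.
Local Open Scope ring_scope.

Lemma sumr_setC (T : finType) (V : nmodType) (S : {set T}) (F : T -> V) :
  \sum_i F i = \sum_(i in S) F i + \sum_(i in ~: S) F i.
Proof. by rewrite (bigID (mem S)) /=; congr (_ + _); apply: eq_bigl => i; rewrite inE. Qed.

Lemma abs_sqr_diff_succ (x y : int) : 0 <= y <= x ->
  `|(x + 1) ^+ 2 - y ^+ 2| = `|x ^+ 2 - y ^+ 2| + (2 * x + 1).
Proof. by case/andP=> y_ge0 le_yx; rewrite !ger0_norm; nia. Qed.

Lemma abs_sqr_diff_succ_ge (x y : int) : 0 <= x -> 0 <= y ->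
  `|x ^+ 2 - y ^+ 2| - (2 * x + 1) <= `|(x + 1) ^+ 2 - y ^+ 2|.
Proof. by move=> x_ge0 y_ge0; have := lerB_dist ((x + 1) ^+ 2 - y ^+ 2) (2 * x + 1); nia. Qed.

Section EdgeWeights.
Variables (n : nat) (e : rel 'I_n).

Lemma deg_le_pred a : irreflexive e -> (deg e a <= n.-1)%N.
Proof.
move=> e_irr; rewrite /deg -[n in n.-1]card_ord -(cardsC1 a).
by apply/subset_leq_card/subsetP => b; rewrite !inE; apply: contraTneq => ->; rewrite e_irr.
Qed.

Lemma deg_gt0_connected u v : connected_graph e -> u != v -> (0 < deg e u)%N.
Proof.
move=> e_conn neq_uv; case/connectP: (e_conn u v) => [[|x p]] /=.
  by move=> _ eq_vu; rewrite eq_vu eqxx in neq_uv.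
by case/andP=> e_ux _ _; apply/card_gt0P; exists x; rewrite inE.
Qed.

Definition edge_weight (a b : 'I_n) : int :=
  if e a b then `|(deg e a)%:Z ^+ 2 - (deg e b)%:Z ^+ 2| else 0.

Definition cM2z : int := \sum_a \sum_b edge_weight a b.

Lemma edge_weight_ge0 a b : 0 <= edge_weight a b.
Proof. by rewrite /edge_weight; case: ifP. Qed.

Hypothesis e_sym : symmetric e.

Lemma edge_weight_sym a b : edge_weight a b = edge_weight b a.
Proof. by rewrite /edge_weight e_sym distrC. Qed.

Lemma cM2zE : irreflexive e -> cM2z = (cM2 e)%:Z *+ 2.
Proof.
move=> e_irr; pose w_lt (a b : 'I_n) := if (a < b)%N then edge_weight a b else 0.
have -> : (cM2 e)%:Z = \sum_a \sum_b w_lt a b.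
  rewrite (big_morph Posz PoszD (erefl _)); apply: eq_bigr => a _.
  rewrite (big_morph Posz PoszD (erefl _)) big_mkcond /=.
  by apply: eq_bigr => b _; rewrite /w_lt /edge_weight; case: (a < b)%N; case: (e a b).
have w_split a b : edge_weight a b = w_lt a b + w_lt b a.
  rewrite /w_lt [edge_weight b a]edge_weight_sym.
  by case: ltngtP => [||/val_inj ->]; rewrite ?addr0 ?add0r // /edge_weight e_irr.
rewrite /cM2z mulr2n [X in _ + X]exchange_big -big_split /=.
by apply: eq_bigr => a _; rewrite -big_split; apply: eq_bigr => b _; apply: w_split.
Qed.

Lemma sum_edges (f : 'I_n -> int) :
  \sum_a \sum_b (if e a b then f a + f b else 0) = (\sum_a f a *+ deg e a) *+ 2.
Proof.
have row (g : 'I_n -> int) : \sum_a \sum_b (if e a b then g a else 0) = \sum_a g a *+ deg e a.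
  by apply: eq_bigr => a _; rewrite -big_mkcond sumr_const /deg cardsE.
rewrite mulr2n -{1}row -[X in _ + X]row [X in _ + X]exchange_big -big_split /=.
apply: eq_bigr => a _; rewrite -big_split; apply: eq_bigr => b _ /=.
by rewrite e_sym; case: (e b a); rewrite ?addr0.
Qed.

End EdgeWeights.

Definition add_edge n (e : rel 'I_n) (u v : 'I_n) : rel 'I_n :=
  fun a b => [|| e a b, (a == u) && (b == v) | (a == v) && (b == u)].

Lemma add_edge_connected n (e : rel 'I_n) u v :
  connected_graph e -> connected_graph (add_edge e u v).
Proof.
move=> e_conn a b; apply: connect_sub (e_conn a b) => x y e_xy.
by rewrite connect1 //= /add_edge e_xy.
Qed.

Section AddEdge.
Variables (n : nat) (e : rel 'I_n) (u v : 'I_n).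
Hypotheses (e_simple : simple_graph e) (neq_uv : u != v) (nadj_uv : ~~ e u v).

Local Notation e' := (add_edge e u v).
Let e_sym : symmetric e := e_simple.1.
Let e_irr : irreflexive e := e_simple.2.

Lemma add_edge_simple : simple_graph e'.
Proof.
split=> [a b | a]; rewrite /add_edge.
  by rewrite e_sym [(b == u) && _]andbC [(b == v) && _]andbC (orbC ((a == v) && _)).
by rewrite e_irr /=; apply/negbTE; apply: contra neq_uv => /orP[]/andP[/eqP<- /eqP<-].
Qed.

Lemma deg_add_edge x : deg e' x = (deg e x + ((x == u) || (x == v)))%N.
Proof.
rewrite /deg; have [->|neq_xu] := eqVneq x u.
  rewrite (_ : [set b | e' u b] = v |: [set b | e u b]).
    by rewrite cardsU1 inE nadj_uv addnC.
  by apply/setP => b; rewrite !inE /add_edge eqxx (negbTE neq_uv) /= orbF orbC.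
have [->|neq_xv] := eqVneq x v.
  rewrite (_ : [set b | e' v b] = u |: [set b | e v b]).
    by rewrite cardsU1 inE e_sym nadj_uv addnC orbT.
  by apply/setP => b; rewrite !inE /add_edge eqxx eq_sym (negbTE neq_uv) /= orbC.
rewrite /= addn0; apply: eq_card => b.
by rewrite !inE /add_edge (negbTE neq_xu) (negbTE neq_xv) !orbF.
Qed.

Hypothesis u_max : forall x, (deg e x <= deg e u)%N.

(* A lower bound for the gain of every edge of [e] at [x] when [uv] is added. *)
Let bonus x : int :=
  if x == u then 2 * (deg e u)%:Z + 1
  else if x == v then
    (if deg e v == deg e u then 2 * (deg e v)%:Z + 1 else - (2 * (deg e v)%:Z + 1))
  else 0.

Lemma edge_weight_add_edge_l a b : e a b -> b != u -> b != v ->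
  edge_weight e a b + bonus a <= edge_weight e' a b.
Proof.
move=> e_ab nbu nbv; have e'_ab : e' a b by rewrite /add_edge e_ab.
rewrite /edge_weight e_ab e'_ab !deg_add_edge (negbTE nbu) (negbTE nbv) addn0 /bonus.
have le_bu : (deg e b)%:Z <= (deg e u)%:Z by rewrite lez_nat u_max.
have [->|nau] := eqVneq a u; first by rewrite /= PoszD abs_sqr_diff_succ.
have [->|nav] := eqVneq a v; last by rewrite /= addr0 addn0.
rewrite /= PoszD; case: eqP => [eq_vu | _]; last exact: abs_sqr_diff_succ_ge.
by rewrite abs_sqr_diff_succ // eq_vu.
Qed.

Lemma edge_weight_add_edge a b :
  edge_weight e a b + (if e a b then bonus a + bonus b else 0) <= edge_weight e' a b.
Proof.
have [e_ab|/negbTE nadj_ab] := boolP (e a b); last first.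
  by rewrite addr0 [edge_weight e a b]/edge_weight nadj_ab edge_weight_ge0.
have [b_uv | /norP[nbu nbv]] := boolP ((b == u) || (b == v)); last first.
  have -> : bonus b = 0 by rewrite /bonus (negbTE nbu) (negbTE nbv).
  by rewrite addr0 edge_weight_add_edge_l.
have nadj_vu : ~~ e v u by rewrite e_sym.
have [nau nav] : a != u /\ a != v.
  by case/orP: b_uv e_ab => /eqP-> e_ab; split; apply: contraTneq e_ab => ->; rewrite ?e_irr.
have -> : bonus a = 0 by rewrite /bonus (negbTE nau) (negbTE nav).
have e'_sym : symmetric e' := add_edge_simple.1.
rewrite add0r edge_weight_sym // [edge_weight e' a b]edge_weight_sym //.
by apply: edge_weight_add_edge_l; rewrite // e_sym.
Qed.

Lemma sum_bonus : \sum_x bonus x *+ deg e x = bonus u *+ deg e u + bonus v *+ deg e v.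
Proof.
rewrite (bigD1 u) // (bigD1 v) /=; last by rewrite eq_sym.
rewrite addrA big1 ?addr0 // => x /andP[nxu nxv].
by rewrite /bonus (negbTE nxu) (negbTE nxv) mul0rn.
Qed.

Lemma sum_bonus_gt0 : (0 < deg e u)%N -> 0 < \sum_x bonus x *+ deg e x.
Proof.
move=> du_gt0; have le_vu := u_max v.
rewrite sum_bonus /bonus eqxx eq_sym (negbTE neq_uv) eqxx !pmulrn !mulrzz.
by case: eqP => [eq_vu | neq_vu]; nia.
Qed.

Lemma cM2z_add_edge_gt : (0 < deg e u)%N -> cM2z e < cM2z e'.
Proof.
move=> du_gt0; apply: (@lt_le_trans _ _ (cM2z e + (\sum_x bonus x *+ deg e x) *+ 2)).
  by rewrite ltrDl pmulrn_lgt0 // sum_bonus_gt0.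
rewrite -sum_edges // /cM2z -big_split /=; apply: ler_sum => a _.
by rewrite -big_split; apply: ler_sum => b _; apply: edge_weight_add_edge.
Qed.

End AddEdge.

Section DominatingSet.
Variables (n : nat) (e : rel 'I_n) (S : {set 'I_n}).
Hypotheses (e_simple : simple_graph e) (S_dom : forall u v, u \in S -> u != v -> e u v).

Let e_sym : symmetric e := e_simple.1.
Let e_irr : irreflexive e := e_simple.2.

Lemma deg_dominating u : u \in S -> deg e u = n.-1.
Proof.
move=> uS; rewrite /deg -[n in n.-1]card_ord -(cardsC1 u); apply: eq_card => b.
by rewrite !inE; have [->|nbu] := eqVneq b u; rewrite ?e_irr // S_dom // eq_sym.
Qed.

Lemma card_dominating_le_deg b : b \notin S -> (#|S| <= deg e b)%N.
Proof.
move=> bNS; apply/subset_leq_card/subsetP => x xS; rewrite inE e_sym S_dom //.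
by apply: contraNneq bNS => <-.
Qed.

Lemma cM2z_dominating :
  cM2z e = (\sum_(b in ~: S) ((n.-1)%:Z ^+ 2 - (deg e b)%:Z ^+ 2)) *+ (2 * #|S|)
           + \sum_(a in ~: S) \sum_(b in ~: S) edge_weight e a b.
Proof.
pose w b := (n.-1)%:Z ^+ 2 - (deg e b)%:Z ^+ 2.
have cross a b : a \in S -> b \notin S -> edge_weight e a b = w b.
  move=> aS bNS; have := deg_le_pred b e_irr.
  rewrite /edge_weight S_dom //; last by apply: contraNneq bNS => <-.
  by rewrite (deg_dominating aS) /w => le_bn; rewrite ger0_norm //; nia.
have inner a b : a \in S -> b \in S -> edge_weight e a b = 0.
  by move=> aS bS; rewrite /edge_weight !deg_dominating // subrr normr0; case: ifP.
rewrite /cM2z (sumr_setC S) (eq_bigr (fun=> \sum_(b in ~: S) w b)) => [|a aS]; last first.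
  rewrite (sumr_setC S) big1 ?add0r => [|b bS]; last exact: inner.
  by apply: eq_bigr => b; rewrite inE; apply: cross.
rewrite [X in _ + X](eq_bigr (fun a => w a *+ #|S| + \sum_(b in ~: S) edge_weight e a b)) => [|a].
  by rewrite sumr_const [X in _ + X = _]big_split /= sumrMnl addrA [(2 * _)%N]mulnC mulrnA mulr2n.
rewrite inE => aNS; rewrite (sumr_setC S) -sumr_const; congr (_ + _).
by apply: eq_bigr => b bS; rewrite edge_weight_sym // cross.
Qed.

Lemma cM2z_dominating_le : (#|~: S| <= #|S|)%N ->
  cM2z e <= (#|S| * #|~: S|)%:Z * ((n.-1)%:Z ^+ 2 - #|S|%:Z ^+ 2) *+ 2.
Proof.
move=> le_mk; set k := #|S|; set m := #|~: S|.
pose t b := (deg e b)%:Z ^+ 2 - k%:Z ^+ 2.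
have t_ge0 b : b \notin S -> 0 <= t b.
  by move/card_dominating_le_deg; rewrite /t subr_ge0 -lez_nat => le_kb; nia.
have inner_le a b : a \notin S -> b \notin S -> edge_weight e a b <= t a + t b.
  move=> /t_ge0 ta_ge0 /t_ge0 tb_ge0; rewrite /edge_weight; case: ifP => _; last exact: addr_ge0.
  by move: ta_ge0 tb_ge0; rewrite /t ler_norml => *; apply/andP; split; lia.
set T := \sum_(b in ~: S) t b.
have T_ge0 : 0 <= T by apply: sumr_ge0 => b; rewrite inE; apply: t_ge0.
have sum_cross : \sum_(b in ~: S) ((n.-1)%:Z ^+ 2 - (deg e b)%:Z ^+ 2)
                 = ((n.-1)%:Z ^+ 2 - k%:Z ^+ 2) *+ m - T.
  by rewrite -sumr_const -sumrB; apply: eq_bigr => b _; rewrite /t; ring.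
have sum_inner : \sum_(a in ~: S) \sum_(b in ~: S) edge_weight e a b <= T *+ m *+ 2.
  apply: (@le_trans _ _ (\sum_(a in ~: S) \sum_(b in ~: S) (t a + t b))).
    by apply: ler_sum => a; rewrite inE => aNS; apply: ler_sum => b; rewrite inE; apply: inner_le.
  rewrite (eq_bigr (fun a => t a *+ m + T)) => [|a _]; last by rewrite big_split /= sumr_const.
  by rewrite big_split /= sumrMnl sumr_const mulr2n.
rewrite cM2z_dominating sum_cross; move: sum_inner le_mk; rewrite -lez_nat !pmulrn !mulrzz.
by nia.
Qed.

End DominatingSet.

Definition split_graph n (S : {set 'I_n}) : rel 'I_n :=
  fun a b => (a != b) && ((a \in S) || (b \in S)).

Section SplitGraph.
Variables (n : nat) (S : {set 'I_n}).

Local Notation s := (split_graph S).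

Lemma split_graph_simple : simple_graph s.
Proof. by split=> [a b | a]; rewrite /split_graph ?eqxx // eq_sym orbC. Qed.

Lemma split_graph_connected : S != set0 -> connected_graph s.
Proof.
case/set0Pn => z zS; have to_z x : connect s x z.
  by have [->|nxz] := eqVneq x z; rewrite ?connect0 // connect1 // /split_graph nxz zS orbT.
move=> a b; apply: connect_trans (to_z a) _.
by rewrite (sym_connect_sym split_graph_simple.1) to_z.
Qed.

Lemma cM2z_split_graph :
  cM2z s = (#|S| * #|~: S|)%:Z * ((n.-1)%:Z ^+ 2 - #|S|%:Z ^+ 2) *+ 2.
Proof.
have S_dom u v : u \in S -> u != v -> s u v by rewrite /split_graph => -> ->.
have deg_out b : b \notin S -> deg s b = #|S|.
  move=> bNS; apply: eq_card => x; rewrite inE /split_graph (negbTE bNS) /=.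
  by case: eqVneq => [<-|]; rewrite ?(negbTE bNS).
rewrite (cM2z_dominating split_graph_simple S_dom) [X in _ + X]big1 => [|a aNS]; last first.
  apply: big1 => b bNS; move: aNS bNS; rewrite /edge_weight /split_graph !inE.
  by move=> /negbTE-> /negbTE->; rewrite andbF.
rewrite addr0 (eq_bigr (fun=> (n.-1)%:Z ^+ 2 - #|S|%:Z ^+ 2)) => [|b]; last first.
  by rewrite inE => /deg_out ->.
by rewrite sumr_const !pmulrn !mulrzz !PoszM; ring.
Qed.

End SplitGraph.

Section Extremal.
Variables (n : nat) (e : rel 'I_n).
Hypotheses (e_simple : simple_graph e) (e_conn : connected_graph e).
Hypothesis e_extremal : forall e' : rel 'I_n,
  simple_graph e' -> connected_graph e' -> (cM2 e' <= cM2 e)%N.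

Let cM2z_le (e' : rel 'I_n) : simple_graph e' -> connected_graph e' -> cM2z e' <= cM2z e.
Proof.
move=> [e'_sym e'_irr] e'_conn; have [e_sym e_irr] := e_simple.
by rewrite (cM2zE e_sym e_irr) (cM2zE e'_sym e'_irr) lerMn2r lez_nat e_extremal ?orbT.
Qed.

Lemma Mset_dominating u v : u \in Mset e -> u != v -> e u v.
Proof.
move=> uM neq_uv; apply/negPn/negP => nadj_uv.
have u_max x : (deg e x <= deg e u)%N by move: uM; rewrite inE => /eqP->; apply: leq_bigmax.
have := cM2z_add_edge_gt e_simple neq_uv nadj_uv u_max (deg_gt0_connected e_conn neq_uv).
by rewrite ltNge cM2z_le //; [apply: add_edge_simple | apply: add_edge_connected].
Qed.

Lemma Mset_card_le_half : (2 < n)%N -> (2 * #|Mset e| <= n)%N.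
Proof.
move=> n_gt2; rewrite leqNgt; apply/negP => lt_n2k.
have card_M : (#|Mset e| + #|~: Mset e|)%N = n by rewrite cardsC card_ord.
have le_mk : (#|~: Mset e| <= #|Mset e|)%N by lia.
have upper := cM2z_dominating_le e_simple (@Mset_dominating) le_mk.
suff [S S_ne0] : exists2 S : {set 'I_n}, S != set0 & cM2z e < cM2z (split_graph S).
  by rewrite ltNge cM2z_le //; [apply: split_graph_simple | apply: split_graph_connected].
set k := #|Mset e| in lt_n2k card_M le_mk upper *.
set m := #|~: Mset e| in card_M le_mk upper *.
have [m0 | m_gt0] := posnP m.
  have x : 'I_n by exists 0%N; apply: leq_trans n_gt2.
  exists [set x]; first by rewrite -card_gt0 cards1.
  rewrite (le_lt_trans upper) // cM2z_split_graph cards1 cardsC1 card_ord m0.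
  by rewrite muln0 mul0r mul0rn pmulrn_lgt0 // mul1n mulr_gt0 ?ltz_nat //; nia.
exists (~: Mset e); first by rewrite -card_gt0.
rewrite (le_lt_trans upper) // cM2z_split_graph setCK -/k -/m ltrMn2r /= mulnC.
by rewrite ltr_pM2l ?ltz_nat ?muln_gt0 ?m_gt0 ?(leq_trans m_gt0) // ltrD2l ltrN2; nia.
Qed.

End Extremal.

Lemma le_quadratic_root (R : rcfType) (k n : R) :
  3 * k ^+ 2 + (4 * n - 9) * k <= 3 * n ^+ 2 - 5 * n ->
  k <= - (2%:R / 3%:R) * n + 3%:R / 2%:R
       + (6%:R)^-1 * Num.sqrt (52%:R * n ^+ 2 - 132%:R * n + 81%:R).
Proof.
move=> le_quad; set Q := 52%:R * n ^+ 2 - 132%:R * n + 81%:R.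
(* (6 k + 4 n - 9)^2 = 12 (3 k^2 + (4 n - 9) k) + (4 n - 9)^2 *)
have le_sqrtQ : 6 * k + 4 * n - 9 <= Num.sqrt Q.
  apply: le_trans (ler_norm _) _; rewrite -sqrtr_sqr ler_wsqrtr //.
  by rewrite /Q; nra.
by lra.
Qed.

Theorem proposition3 (R : rcfType) (n : nat) (e : rel 'I_n) :
  (4 <= n)%N ->
  simple_graph e -> connected_graph e ->
  (forall e' : rel 'I_n, simple_graph e' -> connected_graph e' ->
     (cM2 e' <= cM2 e)%N) ->
  (#|Mset e|)%:R <= - (2%:R / 3%:R) * n%:R + 3%:R / 2%:R
     + (6%:R)^-1 * Num.sqrt (52%:R * n%:R ^+ 2 - 132%:R * n%:R + 81%:R) :> R.
Proof.
move=> n_ge4 e_simple e_conn e_extremal; apply: le_quadratic_root.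
have := Mset_card_le_half e_simple e_conn e_extremal (ltnW n_ge4).
set k := #|Mset e| => le_half.
have : (3 * k ^ 2 + 4 * n * k + 5 * n <= 3 * n ^ 2 + 9 * k)%N by nia.
by rewrite -(ler_nat R) !natrD !natrM; lra.
Qed.
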